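(* Let $V$ be a mixed lattice vector space and $p$ a mixed-monotone seminorm on $V$. Then $q(x)=p(s(x))$ defines a mixed lattice seminorm on $V$. If $p$ is a mixed-monotone norm, then $q$ is a mixed lattice norm.
   Context: A mixed lattice vector space $(V,\le,\preccurlyeq)$ is a real vector space $V$ with two partial orderings $\le$ (initial order) and $\preccurlyeq$ (specific order), each making $V$ a partially ordered vector space, with positive cones $V_p=\{x:0\le x\}$, $V_{sp}=\{x:0\preccurlyeq x\}$, such that: (1) for all $x,y$ the elements $x\curlyvee y=\min\{w: w\succcurlyeq x,\ w\ge y\}$ and $x\curlywedge y=\max\{w: w\preccurlyeq x,\ w\le y\}$ exist (min/max with respect to $\le$); (2) $x\preccurlyeq y$ implies $x\le y$; (3) $x\curlyvee y, x\curlywedge y\in V_{sp}$ whenever $x,y\in V_{sp}$. Notation: $x^u=0\curlyvee x$, $x^l=0\curlyvee(-x)$, $s(x)=x^u+x^l$. A seminorm (norm) $p$ is mixed-monotone if $0\preccurlyeq x\le y$ implies $p(x)\le p(y)$, and is a mixed lattice seminorm (norm) if $s(x)\le s(y)$ implies $p(x)\le p(y)$. *)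

From HB Require Import structures.
From mathcomp Require Import all_boot all_order all_algebra.
From mathcomp Require Import reals.
Set Implicit Arguments. Unset Strict Implicit. Unset Printing Implicit Defensive.
Import Order.TTheory GRing.Theory Num.Theory.
Local Open Scope ring_scope.

Section MixedLattice.
Variables (R : realType) (V : lmodType R).

Definition povs (le : V -> V -> Prop) : Prop :=
  [/\ (forall x, le x x),
      (forall x y, le x y -> le y x -> x = y),
      (forall x y z, le x y -> le y z -> le x z),
      (forall x y z, le x y -> le (x + z) (y + z)) &
      (forall (a : R) x y, 0 <= a -> le x y -> le (a *: x) (a *: y))].

(* Mixed lattice vector space (V, le, sle), where [le] is the initial order,
   [sle] the specific order, [msup x y] = x ⋎ y and [minf x y] = x ⋏ y.
   Since min/max w.r.t. le are unique, giving these operations together with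
   their characterizing property is equivalent to requiring existence. *)
Definition mixed_lattice_vector_space (le sle : V -> V -> Prop)
  (msup minf : V -> V -> V) : Prop :=
  povs le /\ povs sle /\
      (forall x y, sle x (msup x y) /\ le y (msup x y) /\
         (forall w, sle x w -> le y w -> le (msup x y) w)) /\
      (forall x y, sle (minf x y) x /\ le (minf x y) y /\
         (forall w, sle w x -> le w y -> le w (minf x y))) /\
      (forall x y, sle x y -> le x y) /\
      (forall x y, sle 0 x -> sle 0 y -> sle 0 (msup x y) /\ sle 0 (minf x y)).

Definition upart (msup : V -> V -> V) (x : V) : V := msup 0 x.
Definition lpart (msup : V -> V -> V) (x : V) : V := msup 0 (- x).
Definition sabs (msup : V -> V -> V) (x : V) : V := upart msup x + lpart msup x.

Definition seminorm (p : V -> R) : Prop :=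
  (forall x y, p (x + y) <= p x + p y) /\
  (forall (a : R) x, p (a *: x) = `|a| * p x).

Definition is_norm (p : V -> R) : Prop :=
  seminorm p /\ (forall x, p x = 0 -> x = 0).

Definition mixed_monotone (le sle : V -> V -> Prop) (p : V -> R) : Prop :=
  forall x y, sle 0 x -> le x y -> p x <= p y.

Definition mixed_lattice_prop (le : V -> V -> Prop) (msup : V -> V -> V)
  (p : V -> R) : Prop :=
  forall x y, le (sabs msup x) (sabs msup y) -> p x <= p y.

Definition mixed_lattice_seminorm le msup p :=
  seminorm p /\ mixed_lattice_prop le msup p.
Definition mixed_lattice_norm le msup p :=
  is_norm p /\ mixed_lattice_prop le msup p.

End MixedLattice.

From mathcomp Require Import all_boot all_order all_algebra.
From mathcomp Require Import reals.
Set Implicit Arguments. Unset Strict Implicit. Unset Printing Implicit Defensive.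
Import Order.TTheory GRing.Theory Num.Theory.
Local Open Scope ring_scope.

(* The map [s] is sublinear and absolutely homogeneous with respect to the
   initial order and takes values in the specific positive cone; a
   mixed-monotone seminorm turns these order inequalities into the seminorm
   axioms for [q = p \o s], while the mixed lattice property of [q] is
   mixed monotonicity of [p] applied to the positive elements [s x].
   Definiteness comes from [s x = 0], which forces [x^u = x^l = 0] because
   both are specifically positive, hence [x <= 0] and [-x <= 0]. *)

Section PartiallyOrderedVectorSpace.
Variables (R : realType) (V : lmodType R) (le : V -> V -> Prop).
Hypothesis leV : povs le.

Lemma povs_leD (a b c d : V) : le a b -> le c d -> le (a + c) (b + d).
Proof.
case: leV => _ _ leT leD _ hab hcd; apply: leT (leD _ _ c hab) _.
by rewrite [b + c]addrC [b + d]addrC; apply: leD.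
Qed.

Lemma povs_addr_ge0 (a b : V) : le 0 a -> le 0 b -> le 0 (a + b).
Proof. by move=> ha hb; have := povs_leD ha hb; rewrite addr0. Qed.

Lemma povs_oppr_le0 (a : V) : le 0 a -> le (- a) 0.
Proof. by case: leV => _ _ _ leD _ /(leD _ _ (- a)); rewrite addrN add0r. Qed.

Lemma povs_oppr_ge0 (a : V) : le (- a) 0 -> le 0 a.
Proof. by case: leV => _ _ _ leD _ /(leD _ _ a); rewrite addNr add0r. Qed.

Lemma povs_addr_eq0 (a b : V) : le 0 a -> le 0 b -> a + b = 0 -> a = 0.
Proof.
case: leV => _ leA _ _ _ a_ge0 b_ge0 /eqP; rewrite addr_eq0 => /eqP a_eq.
by apply: leA _ a_ge0; rewrite a_eq; apply: povs_oppr_le0.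
Qed.

End PartiallyOrderedVectorSpace.

Section MixedLattice.
Variables (R : realType) (V : lmodType R).
Variables (le sle : V -> V -> Prop) (msup : V -> V -> V).
Hypotheses (leV : povs le) (sleV : povs sle).
Hypothesis msupP : forall x y, sle x (msup x y) /\ le y (msup x y) /\
  (forall w, sle x w -> le y w -> le (msup x y) w).
Hypothesis sle_le : forall x y, sle x y -> le x y.

Lemma upart_sge0 (x : V) : sle 0 (upart msup x).
Proof. exact: (msupP 0 x).1. Qed.

Lemma le_upart (x : V) : le x (upart msup x).
Proof. exact: (msupP 0 x).2.1. Qed.

Lemma upart_le (x w : V) : sle 0 w -> le x w -> le (upart msup x) w.
Proof. exact: (msupP 0 x).2.2. Qed.

Lemma lpartE (x : V) : lpart msup x = upart msup (- x).
Proof. by []. Qed.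

Lemma sabs_sge0 (x : V) : sle 0 (sabs msup x).
Proof. exact: (povs_addr_ge0 sleV (upart_sge0 x) (upart_sge0 (- x))). Qed.

Lemma upartD_le (x y : V) :
  le (upart msup (x + y)) (upart msup x + upart msup y).
Proof.
apply: upart_le; first exact: (povs_addr_ge0 sleV (upart_sge0 x) (upart_sge0 y)).
exact: (povs_leD leV (le_upart x) (le_upart y)).
Qed.

Lemma sabsD_le (x y : V) : le (sabs msup (x + y)) (sabs msup x + sabs msup y).
Proof.
rewrite /sabs !lpartE opprD addrACA.
exact: (povs_leD leV (upartD_le x y) (upartD_le (- x) (- y))).
Qed.

Lemma upart0 : upart msup 0 = 0.
Proof.
case: leV => leR leA _ _ _; apply: leA; last exact: sle_le (upart_sge0 0).
by apply: upart_le; [case: sleV | apply: leR].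
Qed.

Lemma upartZ (c : R) (x : V) :
  0 <= c -> upart msup (c *: x) = c *: upart msup x.
Proof.
case: leV => _ leA _ _ leZ; case: sleV => _ _ _ _ sZ.
rewrite le_eqVlt => /orP [/eqP <-|c_gt0]; first by rewrite !scale0r upart0.
have sZ0 a y : 0 <= a -> sle 0 y -> sle 0 (a *: y).
  by move=> a_ge0 /(sZ a _ _ a_ge0); rewrite scaler0.
(* The reverse inequality is the forward one for [c^-1] and [c *: x]. *)
have upartZ_le a y : 0 < a -> le (upart msup (a *: y)) (a *: upart msup y).
  move=> a_gt0; apply: upart_le; first exact/sZ0/upart_sge0/ltW.
  exact/leZ/le_upart/ltW.
apply: leA; first exact: upartZ_le.
have c_neq0 : c != 0 by rewrite gt_eqF.
rewrite -[upart msup (c *: x)](scalerKV c_neq0).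
apply: leZ; first exact: ltW.
by have := upartZ_le c^-1 (c *: x); rewrite scalerK // invr_gt0; apply.
Qed.

Lemma sabsN (x : V) : sabs msup (- x) = sabs msup x.
Proof. by rewrite /sabs !lpartE opprK addrC. Qed.

Lemma sabsZ (a : R) (x : V) : sabs msup (a *: x) = `|a| *: sabs msup x.
Proof.
have sabsZ_ge0 c y : 0 <= c -> sabs msup (c *: y) = c *: sabs msup y.
  by move=> c_ge0; rewrite /sabs !lpartE -scalerN !upartZ // scalerDr.
have [a_ge0|a_lt0] := leP 0 a; first by rewrite ger0_norm // sabsZ_ge0.
by rewrite ltr0_norm // -sabsZ_ge0 ?oppr_ge0 ?ltW // scaleNr sabsN.
Qed.

Lemma sabs_eq0 (x : V) : sabs msup x = 0 -> x = 0.
Proof.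
rewrite /sabs lpartE => ul_eq0.
have u0 := povs_addr_eq0 sleV (upart_sge0 x) (upart_sge0 (- x)) ul_eq0.
have l0 : upart msup (- x) = 0 by move: ul_eq0; rewrite u0 add0r.
case: leV => _ leA _ _ _; apply: leA; first by rewrite -u0; apply: le_upart.
by apply: (povs_oppr_ge0 leV); rewrite -l0; apply: le_upart.
Qed.

Variable p : V -> R.
Hypothesis p_mono : mixed_monotone le sle p.

Lemma mixed_lattice_prop_sabs : mixed_lattice_prop le msup (p \o sabs msup).
Proof. by move=> x y; apply: p_mono; apply: sabs_sge0. Qed.

Lemma seminorm_sabs : seminorm p -> seminorm (p \o sabs msup).
Proof.
case=> pD pZ; split=> [x y|a x] /=; last by rewrite sabsZ pZ normr_id.
exact: le_trans (p_mono (sabs_sge0 _) (sabsD_le x y)) (pD _ _).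
Qed.

Lemma is_norm_sabs : is_norm p -> is_norm (p \o sabs msup).
Proof.
case=> p_semi p_def; split; first exact: seminorm_sabs.
by move=> x /p_def /sabs_eq0.
Qed.

End MixedLattice.

Theorem proposition4p5 (R : realType) (V : lmodType R)
  (le sle : V -> V -> Prop) (msup minf : V -> V -> V)
  (HV : mixed_lattice_vector_space le sle msup minf) (p : V -> R) :
  (seminorm p -> mixed_monotone le sle p ->
     mixed_lattice_seminorm le msup (fun x => p (sabs msup x))) /\
  (is_norm p -> mixed_monotone le sle p ->
     mixed_lattice_norm le msup (fun x => p (sabs msup x))).
Proof.
case: HV => leV [sleV [msupP [_ [sle_le _]]]].
split=> [p_semi|p_norm] p_mono; split.
- exact: (seminorm_sabs leV sleV msupP sle_le p_mono p_semi).
- exact: (mixed_lattice_prop_sabs sleV msupP p_mono).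
- exact: (is_norm_sabs leV sleV msupP sle_le p_mono p_norm).
- exact: (mixed_lattice_prop_sabs sleV msupP p_mono).
Qed.
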